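(* If $L$ is a regular language, then ${\rm bdir}(L)$ is regular.
   Context: For $w=a_1\cdots a_{2n}$ of even length, ${\rm bdir}(w)=a_1a_{2n}a_2a_{2n-1}\cdots a_na_{n+1}$; for $w=a_1\cdots a_{2n+1}$ of odd length, ${\rm bdir}(w)=a_1a_{2n+1}a_2a_{2n}\cdots a_na_{n+2}a_{n+1}$. ${\rm bdir}(L)=\{{\rm bdir}(w):w\in L\}$. *)

From mathcomp Require Import all_boot.
Set Implicit Arguments. Unset Strict Implicit. Unset Printing Implicit Defensive.

Record dfa (A : finType) := DFA {
  dfa_state : finType;
  dfa_start : dfa_state;
  dfa_final : {pred dfa_state};
  dfa_trans : dfa_state -> A -> dfa_state }.

Definition dfa_accept (A : finType) (M : dfa A) (w : seq A) : bool :=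
  @dfa_final A M (foldl (@dfa_trans A M) (@dfa_start A M) w).

Definition lang (A : finType) := seq A -> Prop.

Definition regular (A : finType) (L : lang A) : Prop :=
  exists M : dfa A, forall w, L w <-> dfa_accept M w.

(* bdir: a1 a2 ... am  |->  a1 am a2 a(m-1) ...  ; peel off first and last
   letters repeatedly (fuel = size w suffices). *)
Fixpoint bdir_aux (T : Type) (n : nat) (w : seq T) : seq T :=
  match n with
  | 0 => [::]
  | n'.+1 =>
    match w with
    | [::] => [::]
    | x :: s =>
      match rev s with
      | [::] => [:: x]
      | y :: r => x :: y :: bdir_aux n' (rev r)
      end
    end
  end.

Definition bdir (T : Type) (w : seq T) : seq T := bdir_aux (size w) w.

Definition bdir_lang (A : finType) (L : lang A) : lang A :=
  fun w => exists v, L v /\ w = bdir v.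

Example bdir_ex6 : bdir [:: 1; 2; 3; 4; 5; 6] = [:: 1; 6; 2; 5; 3; 4].
Proof. by []. Qed.
Example bdir_ex7 : bdir [:: 1; 2; 3; 4; 5; 6; 7] = [:: 1; 7; 2; 6; 3; 5; 4].
Proof. by []. Qed.

From mathcomp Require Import all_boot.

Set Implicit Arguments. Unset Strict Implicit. Unset Printing Implicit Defensive.

(* Reading bdir v, the letters at even
   positions spell a prefix of v forwards and the letters at odd positions
   spell the remaining suffix of v backwards.  Hence bdir is a bijection on
   words whose inverse is  unzipw w = evens w ++ rev (odds w),  and
   bdir_lang L is exactly the preimage of L under unzipw.
   For the preimage, take a DFA M for L.  A new DFA runs M forwards on the
   even-position letters while keeping the set X of states from which the
   suffix read backwards so far leads to acceptance; an odd-position letter a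
   replaces X by its predecessor set under a.  It accepts when the forward
   state lies in X. *)

Fixpoint evens (T : Type) (w : seq T) : seq T :=
  match w with [::] => [::] | x :: s => x :: odds s end
with odds (T : Type) (w : seq T) : seq T :=
  match w with [::] => [::] | _ :: s => evens s end.

Definition unzipw (T : Type) (w : seq T) : seq T := evens w ++ rev (odds w).

Lemma unzipw_cons2 (T : Type) (x y : T) (w : seq T) :
  unzipw [:: x, y & w] = x :: rcons (unzipw w) y.
Proof. by rewrite /unzipw /= rev_cons -cats1 catA cats1. Qed.

Lemma bdir_aux_fuel (T : Type) (n1 n2 : nat) (w : seq T) :
  size w <= n1 -> size w <= n2 -> bdir_aux n1 w = bdir_aux n2 w.
Proof.
elim: n1 n2 w => [|n1 IH] [|n2] [|x s] //= h1 h2.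
case E: (rev s) => [|y r] //.
have hr : size r < size s by rewrite -(size_rev s) E.
by rewrite (IH n2) // size_rev; apply: leq_trans (ltnW hr) _.
Qed.

Lemma bdir_cons_rcons (T : Type) (x y : T) (m : seq T) :
  bdir (x :: rcons m y) = x :: y :: bdir m.
Proof.
rewrite /bdir /= size_rcons rev_rcons revK.
by rewrite (@bdir_aux_fuel _ (size m).+1 (size m)).
Qed.

Lemma unzipw_bdir (T : Type) (v : seq T) : unzipw (bdir v) = v.
Proof.
move: {2}(size v) (leqnn (size v)) => n; elim: n v => [|n IH] v.
  by rewrite leqn0 => /nilP ->.
case: v => [|x s] //; case/lastP: s => [|m y] // hs.
rewrite bdir_cons_rcons unzipw_cons2 IH //.
by move: hs; rewrite /= size_rcons ltnS => /ltnW.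
Qed.

Lemma bdir_unzipw (T : Type) (w : seq T) : bdir (unzipw w) = w.
Proof.
move: {2}(size w) (leqnn (size w)) => n; elim: n w => [|n IH] w.
  by rewrite leqn0 => /nilP ->.
case: w => [|x [|y b]] // hs.
by rewrite unzipw_cons2 bdir_cons_rcons IH //; apply: leq_trans (leqnSn _) hs.
Qed.

Lemma bdir_langE (A : finType) (L : lang A) (w : seq A) :
  bdir_lang L w <-> L (unzipw w).
Proof.
split; first by case=> v [Lv ->]; rewrite unzipw_bdir.
by move=> Lw; exists (unzipw w); rewrite bdir_unzipw.
Qed.

Section UnzipAutomaton.
Variables (A : finType) (M : dfa A).

(* A state: the forward state of M, the set of states accepting the suffix
   read so far, and whether the next letter is at an odd position. *)
Definition unzip_state : finType := (dfa_state M * {set dfa_state M} * bool)%type.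

Definition unzip_trans (st : unzip_state) (a : A) : unzip_state :=
  let: (p, X, odd_pos) := st in
  if odd_pos then (p, [set q | dfa_trans q a \in X], false)
  else (dfa_trans p a, X, true).

Definition unzip_final (st : unzip_state) : bool :=
  let: (p, X, _) := st in p \in X.

Definition unzip_dfa : dfa A :=
  @DFA A unzip_state (dfa_start M, [set q | dfa_final q], false)
       unzip_final unzip_trans.

Lemma unzip_run (w : seq A) :
  (forall p X, unzip_final (foldl unzip_trans (p, X, false) w) =
     (foldl (@dfa_trans A M) p (evens w ++ rev (odds w)) \in X)) /\
  (forall p X, unzip_final (foldl unzip_trans (p, X, true) w) =
     (foldl (@dfa_trans A M) p (odds w ++ rev (evens w)) \in X)).
Proof.
elim: w => [|x s [IHeven IHodd]]; first by split.
split=> p X /=; first by rewrite IHodd.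
by rewrite IHeven inE rev_cons -cats1 catA !foldl_cat.
Qed.

Lemma unzip_dfa_accept (w : seq A) :
  dfa_accept unzip_dfa w = dfa_accept M (unzipw w).
Proof. by rewrite /dfa_accept /= (proj1 (unzip_run w)) inE. Qed.

End UnzipAutomaton.

Theorem mainTheorem15 (A : finType) (L : lang A) :
  regular L -> regular (bdir_lang L).
Proof.
case=> M HM; exists (unzip_dfa M) => w.
rewrite unzip_dfa_accept; apply: iff_trans (bdir_langE L w) (HM _).
Qed.
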